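(* Let $H_\varepsilon=T_\varepsilon+V_\varepsilon$ be as in the context. For $x\in(\varepsilon\mathbb Z)^d$ and $R>0$ let $B_x(R):=\{y\in(\varepsilon\mathbb Z)^d:|x-y|<R\}$ and $$\Lambda_R(x,H_\varepsilon):=\inf\Big\{\frac{\langle H_\varepsilon\phi,\phi\rangle}{\|\phi\|^2_{\ell^2}}:\ \phi\in c_0(B_x(R)),\ \phi\ne0\Big\}.$$ Then for every $\delta>0$ there is $R_\delta>0$ such that for all $R>R_\delta$ and all $\phi\in c_0((\varepsilon\mathbb Z)^d)$, $$\langle H_\varepsilon\phi,\phi\rangle\ge\sum_{x\in(\varepsilon\mathbb Z)^d}\big(\Lambda_R(x,H_\varepsilon)-\delta\big)|\phi(x)|^2.$$
   Context: Let $d\ge1$, $\varepsilon\in(0,1]$, $\ell^2((\varepsilon\mathbb Z)^d)$ with $\langle u,v\rangle=\sum_x\bar u(x)v(x)$, $(\tau_\gamma u)(x)=u(x+\gamma)$. For $D\subset(\varepsilon\mathbb Z)^d$, $c_0(D)$ is the space of real-valued functions on $(\varepsilon\mathbb Z)^d$ with finite support contained in $D$. (a) Coefficients $a_\gamma(x,\varepsilon)\in\mathbb R$ ($\gamma\in(\varepsilon\mathbb Z)^d$, $x\in\mathbb R^d$) with: (i) $a_\gamma=a^{(0)}_\gamma(x)+\varepsilon a^{(1)}_\gamma(x)+R^{(2)}_\gamma(x,\varepsilon)$, $a^{(j)}_\gamma\in C^\infty$, $|a^{(j)}_\gamma(x)-a^{(j)}_\gamma(x+h)|=O(|h|)$ uniformly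 in $\gamma,x$, $R^{(2)}_\gamma\in C^\infty(\mathbb R^d\times(0,1])$; (ii) $\sum_\gamma a^{(0)}_\gamma=0$, $a^{(0)}_\gamma\le0$ for $\gamma\ne0$; (iii) $a_\gamma(x,\varepsilon)=a_{-\gamma}(x+\gamma,\varepsilon)$; (iv) for all $n\in\mathbb N,\alpha\in\mathbb N^d$, $\|\,|\cdot/\varepsilon|^n\partial^\alpha_xa^{(j)}_\cdot(x)\|_{\ell^2_\gamma}\le C$ and $\|\,|\cdot/\varepsilon|^n\partial^\alpha_xR^{(2)}_\cdot(x,\varepsilon)\|_{\ell^2_\gamma}\le C\varepsilon^2$ uniformly; (v) $\mathrm{span}\{\gamma:a^{(0)}_\gamma(x)<0\}=\mathbb R^d$ for all $x$. $T_\varepsilon=\sum_\gamma a_\gamma(\cdot,\varepsilon)\tau_\gamma$. (b) $V_\varepsilon$ is the restriction to $(\varepsilon\mathbb Z)^d$ of $\hat V_\varepsilon=V_0+\varepsilon V_1+R_2(\cdot;\varepsilon)\in C^\infty(\mathbb R^d)$, $V_0,V_1\in C^\infty$, $R_2\in C^\infty(\mathbb R^d\times(0,\varepsilon_0])$, $\sup_K|R_2|\le C_K\varepsilon^2$ on compacts $K$; $V_\varepsilon$ polynomially bounded and $V_\varepsilon(x)>C>0$ for $|x|\ge R$, $\varepsilon\le\varepsilon_0$; $V_0\ge0$, vanishing exactly at finitely many points $x_1,\dots,x_m$ with positive definite Hessians. (c) $t_0(x_j,\xi):=\sum_\gamma a^{(0)}_\gamma(x_j)e^{-i\gamma\cdot\xi/\varepsilon}>0$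 for $\xi\notin2\pi\mathbb Z^d$. $H_\varepsilon$ is the self-adjoint realization of $T_\varepsilon+V_\varepsilon$ on the maximal domain of multiplication by $V_\varepsilon$. *)

(* R : realType, R^d = 'rV[R]_d, lattice (eps Z)^d
   parametrized by integer row vectors k : 'rV[int]_d  (point eps * k). *)
From HB Require Import structures.
From mathcomp Require Import all_boot all_order all_algebra.
From mathcomp Require Import all_classical all_reals all_analysis.
Set Implicit Arguments. Unset Strict Implicit. Unset Printing Implicit Defensive.
Import Order.TTheory GRing.Theory Num.Theory.
Import numFieldNormedType.Exports.
Local Open Scope classical_set_scope.
Local Open Scope ring_scope.

Section Defs.
Variable R : realType.
Variable d : nat.

Notation Rd := 'rV[R]_d.
Notation Zd := 'rV[int]_d.

Definition enorm n (v : 'rV[R]_n) : R := Num.sqrt (\sum_i (v 0 i) ^+ 2).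

Definition zvec (k : Zd) : Rd := map_mx (fun z : int => z%:~R) k.
Definition lpt (eps : R) (k : Zd) : Rd := eps *: zvec k.

(* partial derivative in coordinate i and iterated partial derivatives
   (a list l of coordinates encodes the multi-index alpha) *)
Definition pderiv n (i : 'I_n) (f : 'rV[R]_n -> R) : 'rV[R]_n -> R :=
  fun x => 'D_(delta_mx 0 i) f x.
Fixpoint ipderiv n (l : seq 'I_n) (f : 'rV[R]_n -> R) : 'rV[R]_n -> R :=
  if l is i :: l' then pderiv i (ipderiv l' f) else f.

Definition smooth_open n (U : set 'rV[R]_n) (f : 'rV[R]_n -> R) :=
  forall l : seq 'I_n, forall x, U x ->
    {for x, continuous (ipderiv l f)} /\
    forall i : 'I_n, derivable (ipderiv l f) x (delta_mx 0 i).

Definition smooth n (f : 'rV[R]_n -> R) := smooth_open setT f.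

Definition smooth_on n (A : set 'rV[R]_n) (f : 'rV[R]_n -> R) :=
  exists F : 'rV[R]_n -> R, exists U : set 'rV[R]_n,
    [/\ open U, A `<=` U, smooth_open U F & forall x, A x -> F x = f x].

(* a function g(x, eps) on R^d x (0, b], seen on R^(d+1) *)
Definition joint (g : Rd -> R -> R) : 'rV[R]_(d + 1) -> R :=
  fun z => g (lsubmx z) (rsubmx z 0 0).
Definition strip (b : R) : set 'rV[R]_(d + 1) :=
  [set z | 0 < rsubmx z 0 0 <= b].

(* unconditional summation over Z^d *)
Definition has_sum (f : Zd -> R) (s : R) :=
  forall e : R, 0 < e -> exists S0 : seq Zd, forall S : seq Zd,
    uniq S -> {subset S0 <= S} -> `|\sum_(k <- S) f k - s| < e.

(* l^2_gamma norm of |gamma/eps|^n g_gamma bounded by C (gamma = eps k) *)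
Definition wl2_le (n : nat) (g : Zd -> R) (C : R) :=
  forall S : seq Zd, uniq S ->
    \sum_(k <- S) (enorm (zvec k) ^+ n * g k) ^+ 2 <= C ^+ 2.

Definition posdef n (M : 'M[R]_n) :=
  forall v : 'rV[R]_n, v != 0 -> 0 < (v *m M *m v^T) 0 0.

Definition hessian (f : Rd -> R) (x : Rd) : 'M[R]_d :=
  \matrix_(i, j) ipderiv [:: i; j] f x.

(* the coefficients a_gamma(x, eps), gamma = eps k *)
Definition coef (a0 a1 : Zd -> Rd -> R) (r2 : Zd -> Rd -> R -> R)
  (k : Zd) (x : Rd) (eps : R) : R := a0 k x + eps * a1 k x + r2 k x eps.

Definition pot (V0 V1 : Rd -> R) (r2 : Rd -> R -> R) (eps : R) (x : Rd) : R :=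
  V0 x + eps * V1 x + r2 x eps.

Definition coef_hyp (a0 a1 : Zd -> Rd -> R) (r2 : Zd -> Rd -> R -> R) :=
      (forall k, smooth (a0 k) /\ smooth (a1 k)) /\
      (forall k, smooth_on (strip 1) (joint (r2 k))) /\
      (forall aj, aj = a0 \/ aj = a1 -> exists C r : R, 0 < r /\
         forall k x h, enorm h < r -> `|aj k x - aj k (x + h)| <= C * enorm h) /\
      (forall x, has_sum (fun k => a0 k x) 0) /\
      (forall k x, k != 0 -> a0 k x <= 0) /\
      (forall eps k x, 0 < eps <= 1 ->
         coef a0 a1 r2 k x eps = coef a0 a1 r2 (- k) (x + lpt eps k) eps) /\
      (forall (n : nat) (l : seq 'I_d), exists C : R, forall x,
         wl2_le n (fun k => ipderiv l (a0 k) x) C /\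
         wl2_le n (fun k => ipderiv l (a1 k) x) C) /\
      (forall (n : nat) (l : seq 'I_d), exists C : R, forall x eps,
         0 < eps <= 1 -> wl2_le n (fun k => ipderiv l (r2 k ^~ eps) x) (C * eps ^+ 2)) /\
      (forall x, exists m, exists ks : 'I_m -> Zd,
         (forall i, a0 (ks i) x < 0) /\ row_full (\matrix_(i < m) zvec (ks i))).

Definition pot_hyp (eps0 : R) (V0 V1 : Rd -> R) (r2 : Rd -> R -> R)
  (a0 : Zd -> Rd -> R) :=
  0 < eps0 /\ (smooth V0 /\ smooth V1) /\
      smooth_on (strip eps0) (joint r2) /\
      (forall K : set Rd, compact K -> exists C : R, forall eps x,
         0 < eps <= eps0 -> K x -> `|r2 x eps| <= C * eps ^+ 2) /\
      (forall eps, 0 < eps <= eps0 -> exists (C : R) (N : nat), forall k : Zd,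
         `|pot V0 V1 r2 eps (lpt eps k)| <= C * (1 + enorm (lpt eps k)) ^+ N) /\
      (exists C R0 : R, 0 < C /\ forall eps (k : Zd), 0 < eps <= eps0 ->
         R0 <= enorm (lpt eps k) -> C < pot V0 V1 r2 eps (lpt eps k)) /\
    exists xs : seq Rd,
      [/\ forall x, 0 <= V0 x,
          forall x, V0 x = 0 <-> x \in xs,
          forall x, x \in xs -> posdef (hessian V0 x)
        & (* (c): t0(x_j, xi) = sum_k a0_k(x_j) e^{-i k.xi} is real and > 0
             for xi not in 2 pi Z^d *)
          forall x, x \in xs -> forall xi : Rd,
            ~ (exists z : Zd, xi = (2 * pi) *: zvec z) ->
            exists c : R, 0 < c /\
              has_sum (fun k => a0 k x * cos ((zvec k *m xi^T) 0 0)) c /\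
              has_sum (fun k => a0 k x * sin ((zvec k *m xi^T) 0 0)) 0].

(* <H phi, phi> for finitely supported phi : (eps Z)^d -> R *)
Definition Tphi (a : Zd -> Rd -> R -> R) (eps : R) (phi : Zd -> R) (k : Zd) : R :=
  \sum_(m \in [set: Zd]) a m (lpt eps k) eps * phi (k + m).

Definition qform (a : Zd -> Rd -> R -> R) (V : Rd -> R) (eps : R)
  (phi : Zd -> R) : R :=
  \sum_(k \in [set: Zd]) phi k * (Tphi a eps phi k + V (lpt eps k) * phi k).

Definition sqnorm (phi : Zd -> R) : R := \sum_(k \in [set: Zd]) phi k ^+ 2.

Definition c0 (D : set Zd) (phi : Zd -> R) :=
  finite_set [set k | phi k != 0] /\ [set k | phi k != 0] `<=` D.

Definition ball_lat (eps : R) (k : Zd) (r : R) : set Zd :=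
  [set k' | enorm (lpt eps k - lpt eps k') < r].

Definition LambdaR (a : Zd -> Rd -> R -> R) (V : Rd -> R) (eps r : R) (k : Zd) : R :=
  inf [set q | exists phi : Zd -> R, [/\ c0 (ball_lat eps k r) phi,
         phi != (fun _ => 0) & q = qform a V eps phi / sqnorm phi]].

End Defs.

From mathcomp Require Import all_boot all_order all_algebra.
From mathcomp Require Import all_classical all_reals all_analysis.
From mathcomp Require Import lra zify ring.
Import Order.TTheory GRing.Theory Num.Theory.
Set Implicit Arguments. Unset Strict Implicit. Unset Printing Implicit Defensive.
Local Open Scope classical_set_scope.
Local Open Scope ring_scope.

(* An IMS-type localization with a discrete partition of unity.  Cover the
   lattice by the translates chi(. - x) of the indicator chi of the box
   {0, ..., L-1}^d.  Their overlaps sum_x chi(k - x) chi(j - x) = P(j - k)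
   depend only on j - k, with P(0) = L^d =: S and 0 <= S - P(m) <= 2 S |m|^2 / L.
   Hence sum_x <H chi_x phi, chi_x phi> = S <H phi, phi> - E, where E is the form
   with kernel a_{j-k}(eps k) (S - P(j - k)); by Schur's test (columns are handled by
   the symmetry (iii)) |E| <= 2 S A / L |phi|^2,
   A being a uniform bound on sum_gamma |a_gamma| |gamma/eps|^2, which follows from
   the weighted l^2 bounds (iv) because prod_i (1 + m_i^2)^-1 is summable on Z^d.
   Each chi_x phi is supported in the ball of radius d eps L < R around any point
   of its support, so <H chi_x phi, chi_x phi> >= sum_y Lambda_R(y) |chi_x phi(y)|^2.
   Summing over x and taking L >= 2 A / delta gives the claim. *)

Section FiniteSums.
Variable R : realFieldType.

Lemma fsbig_setT_seq (T : choiceType) (f : T -> R) (s : seq T) : uniq s ->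
  (forall k, f k != 0 -> k \in s) -> \sum_(k \in [set: T]) f k = \sum_(k <- s) f k.
Proof.
move=> us fs; rewrite (fsbigE s) //; first by apply: eq_bigl => k; rewrite in_setT.
by move=> k _ ks; apply/eqP; apply: contraNT ks; apply: fs.
Qed.

Lemma ler_sum_subseq (T : eqType) (f : T -> R) (s1 s2 : seq T) : uniq s1 -> uniq s2 ->
  {subset s1 <= s2} -> (forall k, 0 <= f k) -> \sum_(k <- s1) f k <= \sum_(k <- s2) f k.
Proof.
move=> u1 u2 s12 f0.
have -> : \sum_(k <- s1) f k = \sum_(k <- s2 | k \in s1) f k.
  rewrite -[RHS]big_filter; apply: perm_big; apply: uniq_perm; rewrite ?filter_uniq //.
  by move=> k; rewrite mem_filter; case: (boolP (k \in s1)) => // /s12 ->.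
by rewrite [leRHS](bigID (mem s1)) /= lerDl sumr_ge0.
Qed.

Lemma ler_sum_term (T : eqType) (f : T -> R) (s : seq T) k : uniq s -> k \in s ->
  (forall i, 0 <= f i) -> f k <= \sum_(i <- s) f i.
Proof. by move=> us ks f0; rewrite (bigD1_seq k) //= lerDl sumr_ge0. Qed.

Lemma sum_mul_sq_le (T : eqType) (c p : T -> R) (s : seq T) (Q : R) :
  0 < \sum_(k <- s) p k ^+ 2 -> {in s, forall y, p y != 0 -> c y * \sum_(k <- s) p k ^+ 2 <= Q} ->
  \sum_(y <- s) c y * p y ^+ 2 <= Q.
Proof.
move=> N0 cQ; rewrite -[leRHS](divfK (lt0r_neq0 N0)) mulr_sumr big_seq [leRHS]big_seq.
apply: ler_sum => y ys; have [-> | py] := eqVneq (p y) 0; first by rewrite expr0n !mulr0.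
by rewrite ler_wpM2r ?sqr_ge0 // ler_pdivlMr // cQ.
Qed.

Definition kernel_form (T : Type) (K : T -> T -> R) (s : seq T) (phi : T -> R) : R :=
  \sum_(k <- s) \sum_(j <- s) phi k * phi j * K k j.

Lemma kernel_form_ge_schur (T : eqType) (K : T -> T -> R) (s : seq T) (phi : T -> R) (A : R) :
  {in s, forall k, \sum_(j <- s) `|K k j| <= A} ->
  {in s, forall j, \sum_(k <- s) `|K k j| <= A} ->
  - (A * \sum_(k <- s) phi k ^+ 2) <= kernel_form K s phi.
Proof.
move=> rowA colA; set N := \sum_(k <- s) phi k ^+ 2.
have amgm k j :
    - (`|K k j| * phi k ^+ 2 + `|K k j| * phi j ^+ 2) <= 2 * (phi k * phi j * K k j).
  case: (lerP 0 (K k j)) => [K0 | K0].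
    have := mulr_ge0 K0 (sqr_ge0 (phi k + phi j)); rewrite ger0_norm //; lra.
  have NK0 : 0 <= - K k j by lra.
  have := mulr_ge0 NK0 (sqr_ge0 (phi k - phi j)); rewrite ltr0_norm //; lra.
have weighted (g : T -> T -> R) : {in s, forall k, \sum_(j <- s) g k j <= A} ->
    \sum_(k <- s) \sum_(j <- s) g k j * phi k ^+ 2 <= A * N.
  move=> gA; rewrite /N mulr_sumr big_seq [leRHS]big_seq; apply: ler_sum => k ks.
  by rewrite -mulr_suml ler_wpM2r ?sqr_ge0 ?gA.
have rows := weighted (fun k j => `|K k j|) rowA.
have cols := weighted (fun j k => `|K k j|) colA; rewrite exchange_big /= in cols.
have two : 2 * kernel_form K s phi = \sum_(k <- s) \sum_(j <- s) 2 * (phi k * phi j * K k j).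
  by rewrite /kernel_form mulr_sumr; apply: eq_bigr => k _; rewrite mulr_sumr.
have : - (\sum_(k <- s) \sum_(j <- s) `|K k j| * phi k ^+ 2 +
          \sum_(k <- s) \sum_(j <- s) `|K k j| * phi j ^+ 2) <= 2 * kernel_form K s phi.
  rewrite two -big_split -sumrN; apply: ler_sum => k _.
  by rewrite -big_split -sumrN; apply: ler_sum => j _; apply: amgm.
lra.
Qed.

Section Weights.
Variables (I : Type) (T : eqType) (X : seq I) (w : I -> T -> R) (s : seq T).

Lemma sum_kernel_form_weights (K P : T -> T -> R) (phi : T -> R) :
  {in s &, forall k j, \sum_(x <- X) w x k * w x j = P k j} ->
  \sum_(x <- X) kernel_form K s (fun k => w x k * phi k) =
  kernel_form (fun k j => K k j * P k j) s phi.
Proof.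
move=> wP; rewrite /kernel_form exchange_big big_seq [RHS]big_seq; apply: eq_bigr => k ks.
rewrite exchange_big big_seq [RHS]big_seq; apply: eq_bigr => j js.
by rewrite -(wP k j ks js) !mulr_sumr; apply: eq_bigr => x _; ring.
Qed.

Lemma sum_sq_weights (c : T -> R) (S : R) (phi : T -> R) :
  {in s, forall k, \sum_(x <- X) w x k ^+ 2 = S} ->
  \sum_(x <- X) \sum_(k <- s) c k * (w x k * phi k) ^+ 2 = S * \sum_(k <- s) c k * phi k ^+ 2.
Proof.
move=> wS; rewrite exchange_big mulr_sumr big_seq [RHS]big_seq; apply: eq_bigr => k ks.
by rewrite -(wS k ks) mulr_suml; apply: eq_bigr => x _; ring.
Qed.

End Weights.
End FiniteSums.

Section IntBoxes.
Variable d : nat.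
Notation Zd := 'rV[int]_d.

Definition box_seq (I : seq int) : seq Zd :=
  [seq \row_i nth 0 I (f i) | f : {ffun 'I_d -> 'I_(size I)} <- enum {ffun 'I_d -> 'I_(size I)}].

Lemma box_seq_uniq I : uniq I -> uniq (box_seq I).
Proof.
move=> uI; rewrite map_inj_uniq ?enum_uniq // => f g /rowP fg.
apply/ffunP => i; move: (fg i); rewrite !mxE => /eqP.
by rewrite nth_uniq // => /eqP /val_inj.
Qed.

Lemma mem_box_seq I (z : Zd) : (forall i, z 0 i \in I) -> z \in box_seq I.
Proof.
move=> zI; apply/mapP.
exists [ffun i => Ordinal (etrans (index_mem (z 0 i) I) (zI i))]; first by rewrite mem_enum.
by apply/rowP => i; rewrite !mxE ffunE /= nth_index.
Qed.

Lemma sum_box_seq_prod (R : comPzSemiRingType) I (g : 'I_d -> int -> R) :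
  \sum_(z <- box_seq I) \prod_i g i (z 0 i) = \prod_i \sum_(j <- I) g i j.
Proof.
rewrite big_map big_enum /=.
under [RHS]eq_bigr do rewrite (big_nth 0) big_mkord.
rewrite bigA_distr_bigA /=; apply: eq_bigr => f _; apply: eq_bigr => i _.
by rewrite mxE.
Qed.

Definition zball (N : nat) : seq int :=
  0 :: [seq Posz k.+1 | k <- iota 0 N] ++ [seq Negz k | k <- iota 0 N].

Lemma zball_uniq N : uniq (zball N).
Proof.
rewrite /= cat_uniq !map_inj_uniq ?iota_uniq //; try by move=> ? ? [].
rewrite andbT mem_cat negb_or -!andbA; apply/and3P; split.
- by apply/mapP => -[].
- by apply/mapP => -[].
- by apply/hasP => -[x /mapP [k _ ->]] /mapP [].
Qed.

Lemma mem_zball N (j : int) : (`|j| <= N)%N -> j \in zball N.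
Proof.
case: j => [[|k]|k] /= jN; rewrite inE ?eqxx //= mem_cat.
- by apply/orP; left; apply/mapP; exists k; rewrite // mem_iota.
- by apply/orP; right; apply/mapP; exists k; rewrite // mem_iota.
Qed.

Lemma subset_box_zball (M : seq Zd) : exists N, {subset M <= box_seq (zball N)}.
Proof.
suff [N MN] : exists N : nat, forall m : Zd, m \in M -> forall i, (`|m ord0 i| <= N)%N.
  by exists N => m /MN mN; apply: mem_box_seq => i; apply: mem_zball.
elim: M => [|m M [N MN]]; first by exists 0%N.
exists (maxn N (\max_(i < d) `|m ord0 i|)) => m'; rewrite inE => /orP [/eqP -> | /MN m'N] i.
- by rewrite leq_max (leq_bigmax_cond i) ?orbT.
- by rewrite leq_max m'N.
Qed.

End IntBoxes.

Section ProductWeight.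
Variables (R : realFieldType) (d : nat).
Notation Zd := 'rV[int]_d.

Definition sqnormz (m : Zd) : R := \sum_i (m 0 i)%:~R ^+ 2.
Definition prod_weight (m : Zd) : R := \prod_i (1 + (m 0 i)%:~R ^+ 2)^-1.

Lemma sqnormz_ge0 m : 0 <= sqnormz m.
Proof. by apply: sumr_ge0 => i _; apply: sqr_ge0. Qed.

Lemma prod_weight_ge0 m : 0 <= prod_weight m.
Proof. by apply: prodr_ge0 => i _; rewrite invr_ge0 addr_ge0 ?sqr_ge0. Qed.

Lemma sqnormz_opp m : sqnormz (- m) = sqnormz m.
Proof. by apply: eq_bigr => i _; rewrite mxE rmorphN sqrrN. Qed.

Lemma sqnormz0 : sqnormz 0 = 0.
Proof. by rewrite /sqnormz big1 // => i _; rewrite mxE expr0n. Qed.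

Lemma sqnormz_ge1 m : sqnormz m != 0 -> 1 <= sqnormz m.
Proof.
have -> : sqnormz m = (\sum_i m 0 i ^+ 2)%:~R.
  by rewrite rmorph_sum; apply: eq_bigr => i _; rewrite rmorphXn.
rewrite intr_eq0 => nz; rewrite ler1z -gtz0_ge1 lt_neqAle eq_sym nz /=.
by apply: sumr_ge0 => i _; apply: sqr_ge0.
Qed.

Lemma inv_1sq_le_telescope (a : R) : 1 <= a -> (1 + a ^+ 2)^-1 <= 2 / a - 2 / (a + 1).
Proof.
move=> a1; have -> : 2 / a - 2 / (a + 1) = (a * (a + 1) / 2)^-1.
  by field; rewrite !gt_eqF //; lra.
by rewrite lef_pV2 ?posrE; nra.
Qed.

Lemma sum_zball_inv_1sq N : \sum_(j <- zball N) (1 + j%:~R ^+ 2)^-1 <= 5 :> R.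
Proof.
rewrite big_cons big_cat !big_map /= expr0n addr0 invr1.
under [X in _ + (_ + X)]eq_bigr do rewrite NegzE mulrNz sqrrN -pmulrn.
under eq_bigr do rewrite -pmulrn.
have : \sum_(k <- iota 0 N) (1 + (k.+1)%:R ^+ 2)^-1 <= 2 :> R.
  have -> : iota 0 N = index_iota 0 N by rewrite /index_iota subn0.
  apply: le_trans (_ : \sum_(0 <= k < N) (2 / k.+1%:R - 2 / k.+2%:R) <= _).
    apply: ler_sum_nat => k _; rewrite -[k.+2%:R]natr1.
    by apply: inv_1sq_le_telescope; rewrite ler1n.
  rewrite (telescope_sumr_eq (fun k => - (2 / k.+1%:R)) _ (leq0n N)); last first.
    by move=> k _; rewrite opprK addrC.
  have : 0 <= 2 / N.+1%:R :> R by rewrite divr_ge0.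
  by rewrite divr1; move: (2 / _) => t; lra.
by move: (\sum_(i <- _) _) => t; lra.
Qed.

Lemma sum_prod_weight_le (M : seq Zd) : uniq M -> \sum_(m <- M) prod_weight m <= 5 ^+ d.
Proof.
move=> uM; have [N MN] := subset_box_zball M.
apply: le_trans (ler_sum_subseq uM (box_seq_uniq d (zball_uniq N)) MN prod_weight_ge0) _.
have -> : 5 ^+ d = \prod_(i < d) 5 :> R by rewrite prodr_const card_ord.
rewrite (sum_box_seq_prod _ (fun _ j => (1 + j%:~R ^+ 2)^-1)); apply: ler_prod => i _.
by rewrite sum_zball_inv_1sq sumr_ge0 // => j _; rewrite invr_ge0 addr_ge0 ?sqr_ge0.
Qed.

Lemma inv_sqnormz_exp_le m : sqnormz m != 0 -> (sqnormz m ^+ d)^-1 <= 2 ^+ d * prod_weight m.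
Proof.
move=> /sqnormz_ge1 Q1; set Q := sqnormz m in Q1 *.
have factor_le i : 1 + (m 0 i)%:~R ^+ 2 <= 2 * Q.
  suff : (m 0 i)%:~R ^+ 2 <= Q by lra.
  by rewrite /Q /sqnormz (bigD1 i) //= lerDl sumr_ge0 // => k _; apply: sqr_ge0.
have prod_gt0 : 0 < \prod_i (1 + (m 0 i)%:~R ^+ 2) :> R.
  by apply: prodr_gt0 => i _; rewrite ltr_pwDl ?sqr_ge0.
have Q0 : 0 < Q by lra.
rewrite /prod_weight prodfV -[2 ^+ d]invrK -invfM lef_pV2 ?posrE ?exprn_gt0 //; last first.
  by rewrite mulr_gt0 // invr_gt0 exprn_gt0.
rewrite mulrC ler_pdivrMr ?exprn_gt0 // -exprMn [Q * 2]mulrC.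
have -> : (2 * Q) ^+ d = \prod_(i < d) (2 * Q) by rewrite prodr_const card_ord.
by apply: ler_prod => i _; rewrite factor_le addr_ge0 ?sqr_ge0.
Qed.

End ProductWeight.

Section Moments.
Variables (R : realType) (d : nat).
Notation Zd := 'rV[int]_d.

Lemma enorm_zvec (m : Zd) : enorm (zvec R m) = Num.sqrt (sqnormz R m).
Proof. by congr Num.sqrt; apply: eq_bigr => i _; rewrite mxE. Qed.

Lemma abs_mul_sqnormz_le (g : R) (m : Zd) : `|g| * sqnormz R m <=
  ((enorm (zvec R m) ^+ (d + 2) * g) ^+ 2 + 2 ^+ d * prod_weight R m) / 2.
Proof.
have w0 := prod_weight_ge0 R m.
have [->|nz] := eqVneq (sqnormz R m) 0.
  by rewrite mulr0 divr_ge0 // addr_ge0 ?sqr_ge0 // mulr_ge0 // exprn_ge0.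
have Qinv := inv_sqnormz_exp_le nz; have Q1 := sqnormz_ge1 nz.
rewrite enorm_zvec; set Q := sqnormz R m in Qinv Q1 nz *; set e := Num.sqrt Q.
have e2 : e ^+ 2 = Q by rewrite sqr_sqrtr //; lra.
have e0 : 0 < e by rewrite sqrtr_gt0; lra.
(* AM-GM for u = |m|^(d+2) |g| and v = |m|^-d, using v^2 <= 2^d prod_weight m. *)
set u := e ^+ (d + 2) * `|g|; set v := (e ^+ d)^-1.
have uv : u * v = `|g| * Q by rewrite /u /v exprD e2; field; rewrite expf_neq0 // gt_eqF.
have u2 : u ^+ 2 = (e ^+ (d + 2) * g) ^+ 2 by rewrite /u !exprMn real_normK ?num_real.
have v2 : v ^+ 2 = (Q ^+ d)^-1 by rewrite /v exprVn -exprM mulnC exprM e2.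
have := sqr_ge0 (u - v); rewrite -uv; lra.
Qed.

Lemma sum_moment_le_wl2 (g : Zd -> R) (C : R) (M : seq Zd) : wl2_le (d + 2) g C -> uniq M ->
  \sum_(m <- M) `|g m| * sqnormz R m <= (C ^+ 2 + 10 ^+ d) / 2.
Proof.
move=> gC uM; apply: le_trans (ler_sum _ (fun m _ => abs_mul_sqnormz_le (g m) m)) _.
rewrite -mulr_suml big_split /= -mulr_sumr ler_pM2r // lerD ?gC //.
have -> : 10 ^+ d = 2 ^+ d * 5 ^+ d :> R by rewrite -exprMn -natrM.
by rewrite ler_wpM2l ?exprn_ge0 ?sum_prod_weight_le.
Qed.

Lemma coef_moment_bound (a0 a1 : Zd -> 'rV[R]_d -> R) (ra : Zd -> 'rV[R]_d -> R -> R)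
  (eps : R) : coef_hyp a0 a1 ra -> 0 < eps <= 1 -> exists A : R, forall x (M : seq Zd),
    uniq M -> \sum_(m <- M) `|coef a0 a1 ra m x eps| * sqnormz R m <= A.
Proof.
case=> _ [_ [_ [_ [_ [_ [wl2a [wl2r _]]]]]]] epsI; have /andP [eps0 _] := epsI.
have [C0 HC0] := wl2a (d + 2)%N [::]; have [C2 HC2] := wl2r (d + 2)%N [::].
set B : R -> R := fun C => (C ^+ 2 + 10 ^+ d) / 2.
exists (B C0 + eps * B C0 + B (C2 * eps ^+ 2)) => x M uM.
have mom0 := sum_moment_le_wl2 (HC0 x).1 uM.
have mom1 := sum_moment_le_wl2 (HC0 x).2 uM.
have momr := sum_moment_le_wl2 (HC2 x eps epsI) uM.
apply: le_trans (_ : \sum_(m <- M) (`|a0 m x| * sqnormz R m + eps * (`|a1 m x| * sqnormz R m)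
   + `|ra m x eps| * sqnormz R m) <= _).
  apply: ler_sum => m _; rewrite /coef mulrA -!mulrDl ler_wpM2r ?sqnormz_ge0 //.
  apply: le_trans (ler_normD _ _) _; rewrite lerD2r.
  by apply: le_trans (ler_normD _ _) _; rewrite normrM (gtr0_norm eps0).
rewrite !big_split /= -mulr_sumr.
by rewrite !lerD // ler_wpM2l // ltW.
Qed.

End Moments.

Lemma exp_sub_prod_le (R : realFieldType) (n : nat) (c : 'I_n -> R) (L : R) :
  (forall i, 0 <= c i <= L) -> L * (L ^+ n - \prod_i c i) <= L ^+ n * \sum_i (L - c i).
Proof.
elim: n c => [|n IH] c cL; first by rewrite !big_ord0 expr0 subrr mulr0 mul1r.
have L0 : 0 <= L by have /andP [c0 cL0] := cL ord0; apply: le_trans cL0.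
rewrite big_ord_recr big_ord_recr /= exprSr.
have := IH _ (fun i => cL (widen_ord (leqnSn n) i)).
set P := \prod_(i < n) _; set s := \sum_(i < n) _; have /andP [x0 xL] := cL ord_max.
set x := c ord_max in x0 xL * => IHc.
have P0 : 0 <= P by apply: prodr_ge0 => i _; have /andP [] := cL (widen_ord (leqnSn n) i).
have PL : P <= L ^+ n.
  rewrite -[n in L ^+ n]card_ord -prodr_const ler_prod // => i _; exact: cL.
have IHL := ler_wpM2l L0 IHc.
have PLx : P * (L * (L - x)) <= L ^+ n * (L * (L - x)) by rewrite ler_wpM2r ?mulr_ge0 //; lra.
have -> : L * (L ^+ n * L - P * x) = L * (L * (L ^+ n - P)) + P * (L * (L - x)) by ring.
have -> : L ^+ n * L * (s + (L - x)) = L * (L ^+ n * s) + L ^+ n * (L * (L - x)) by ring.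
lra.
Qed.

Section Cutoff.
Variables (R : realFieldType) (d L : nat).
Notation Zd := 'rV[int]_d.

Definition window (j : int) : R := ((0 <= j) && (j < L%:Z))%:R.
Definition window_seq : seq int := [seq k%:Z | k <- iota 0 L].
Definition cutoff (z : Zd) : R := \prod_i window (z 0 i).
Definition window_corr (n : int) : R := \sum_(j <- window_seq) window j * window (j + n).
Definition cutoff_corr (m : Zd) : R := \prod_i window_corr (m 0 i).

Lemma window_seq_uniq : uniq window_seq.
Proof. by rewrite map_inj_uniq ?iota_uniq // => ? ? []. Qed.

Lemma mem_window_seq j : (j \in window_seq) = (0 <= j) && (j < L%:Z).
Proof.
apply/mapP/idP => [[k] | /andP [j0 jL]].
  by rewrite mem_iota => /andP [_ kL] ->; rewrite ltz_nat.
by exists `|j|%N; rewrite ?mem_iota ?gez0_abs //=; lia.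
Qed.

Lemma window_le1 j : window j <= 1. Proof. by rewrite /window; case: (_ && _). Qed.

Lemma cutoff_neq0 z i : cutoff z != 0 -> z 0 i \in window_seq.
Proof.
rewrite mem_window_seq; apply: contraNT => zi.
by rewrite /cutoff (bigD1 i) //= /window (negbTE zi) mul0r.
Qed.

Lemma cutoff_coord_dist (x j k : Zd) i : cutoff (k - x) != 0 -> cutoff (j - x) != 0 ->
  `|((j - k) 0 i)%:~R| <= L%:R :> R.
Proof.
have window_dist (u v w : int) : 0 <= u - w < L%:Z -> 0 <= v - w < L%:Z -> `|v - u| <= L%:Z.
  by move=> /andP [? ?] /andP [? ?]; rewrite ler_norml; apply/andP; split; lia.
move=> /(cutoff_neq0 i) + /(cutoff_neq0 i); rewrite !mem_window_seq !mxE => kx jx.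
by rewrite -intr_norm -[L%:R]/((L%:Z)%:~R) ler_int (window_dist _ _ _ kx jx).
Qed.

Lemma sum_cutoff_shift (m : Zd) :
  \sum_(z \in [set: Zd]) cutoff z * cutoff (z + m) = cutoff_corr m.
Proof.
rewrite (fsbig_setT_seq (box_seq_uniq d window_seq_uniq)); last first.
  move=> z nz; apply: mem_box_seq => i; apply: cutoff_neq0.
  by apply: contraNneq nz => ->; rewrite mul0r.
rewrite /cutoff_corr -(sum_box_seq_prod _ (fun i j => window j * window (j + m 0 i))).
by apply: eq_bigr => z _; rewrite /cutoff -big_split; apply: eq_bigr => i _; rewrite mxE.
Qed.

Lemma window_corrE n : window_corr n = \sum_(0 <= k < L) window (k%:Z + n).
Proof.
rewrite /window_corr big_map /index_iota subn0; apply: eq_big_seq => k.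
by rewrite mem_iota /window => /andP [_ kL]; rewrite ltz_nat kL mul1r.
Qed.

Lemma window_corr_ge0 n : 0 <= window_corr n.
Proof. by rewrite window_corrE sumr_ge0. Qed.

Lemma window_corr_le n : window_corr n <= L%:R.
Proof.
rewrite window_corrE -[L in L%:R]subn0 -sumr_const_nat.
by apply: ler_sum_nat => k _; apply: window_le1.
Qed.

Lemma window_corr0 : window_corr 0 = L%:R.
Proof.
rewrite window_corrE -[L in L%:R]subn0 -sumr_const_nat; apply: eq_big_nat => k /andP [_ kL].
by rewrite addr0 /window ltz_nat kL.
Qed.

Lemma window_corr_ge n : L%:R - 2 * (`|n|%N)%:R <= window_corr n.
Proof.
set a := `|n|%N; have [La | aL] := leqP L (2 * a).
  have : L%:R <= (2 * a)%:R :> R by rewrite ler_nat.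
  by rewrite natrM; have := window_corr_ge0 n; lra.
apply: le_trans (_ : \sum_(a <= k < L - a) window (k%:Z + n) <= _); last first.
  rewrite window_corrE; apply: ler_sum_subseq; rewrite ?iota_uniq // => k.
  by rewrite !mem_index_iota => /andP [_ kL]; rewrite leq0n /=; lia.
have -> : \sum_(a <= k < L - a) window (k%:Z + n) = \sum_(a <= k < L - a) 1.
  apply: eq_big_nat => k /andP [ak kL]; rewrite /window (_ : _ && _ = true) //.
  by apply/andP; rewrite /a in ak kL; split; lia.
rewrite sumr_const_nat -subnDA natrB; last lia.
by rewrite natrD; lra.
Qed.

Lemma cutoff_corr0 : cutoff_corr 0 = L%:R ^+ d.
Proof.
rewrite /cutoff_corr -[d in _ ^+ d]card_ord -prodr_const.
by apply: eq_bigr => i _; rewrite mxE window_corr0.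
Qed.

Lemma cutoff_corr_le0 m : cutoff_corr m <= cutoff_corr 0.
Proof.
rewrite cutoff_corr0 -[d in _ ^+ d]card_ord -prodr_const.
by apply: ler_prod => i _; rewrite window_corr_ge0 window_corr_le.
Qed.

Lemma cutoff_corr_gap m :
  L%:R * (cutoff_corr 0 - cutoff_corr m) <= 2 * cutoff_corr 0 * sqnormz R m.
Proof.
rewrite cutoff_corr0 [cutoff_corr m]/cutoff_corr.
apply: le_trans (exp_sub_prod_le (c := fun i => window_corr (m 0 i)) _) _.
  by move=> i; rewrite window_corr_ge0 window_corr_le.
rewrite -mulrA mulrCA ler_wpM2l ?exprn_ge0 // mulr_sumr.
apply: ler_sum => i _; have := window_corr_ge (m 0 i).
suff : (`|m ord0 i|%N)%:R <= (m 0 i)%:~R ^+ 2 :> R by lra.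
rewrite -[(m 0 i)%:~R ^+ 2]real_normK ?num_real // -intr_norm natr_absz -natrX ler_nat.
by case: `|_|%N => // k; rewrite expnS leq_pmulr // expn_gt0.
Qed.

End Cutoff.

Section EuclideanNorm.
Variable R : realType.

Lemma coord_le_enorm n (v : 'rV[R]_n) i : `|v 0 i| <= enorm v.
Proof.
rewrite /enorm -sqrtr_sqr ler_wsqrtr // (bigD1 i) //= lerDl.
by apply: sumr_ge0 => k _; apply: sqr_ge0.
Qed.

Lemma enorm_le_coord n (v : 'rV[R]_n) (c : R) : 0 <= c -> (forall i, `|v 0 i| <= c) ->
  enorm v <= n%:R * c.
Proof.
move=> c0 vc; rewrite /enorm -(ger0_norm (mulr_ge0 (ler0n R n) c0)) -sqrtr_sqr ler_wsqrtr //.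
apply: le_trans (_ : \sum_(i < n) c ^+ 2 <= _).
  apply: ler_sum => i _; rewrite -real_normK ?num_real // lerXn2r ?nnegrE //.
rewrite sumr_const card_ord -[c ^+ 2 *+ n]mulr_natl exprMn ler_wpM2r ?sqr_ge0 //.
by rewrite -natrX ler_nat; case: n {v vc} => // n; rewrite expnS leq_pmulr.
Qed.

End EuclideanNorm.

Section LatticeRayleigh.
Variables (R : realType) (d : nat).
Notation Zd := 'rV[int]_d.
Variables (a : Zd -> 'rV[R]_d -> R -> R) (V : 'rV[R]_d -> R) (eps : R).
Hypothesis eps_gt0 : 0 < eps.

Definition ham_kernel (k j : Zd) : R := a (j - k) (lpt eps k) eps + (j == k)%:R * V (lpt eps k).

Lemma qformE (s : seq Zd) (phi : Zd -> R) : uniq s -> (forall k, k \notin s -> phi k = 0) ->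
  qform a V eps phi = kernel_form ham_kernel s phi.
Proof.
move=> us phi0; rewrite /qform (fsbig_setT_seq us); last first.
  by move=> k; apply: contraLR => /phi0 ->; rewrite mul0r eqxx.
apply: eq_big_seq => k ks; rewrite /Tphi (fsbig_setT_seq (s := [seq j - k | j <- s])).
- rewrite big_map mulrDr mulr_sumr /ham_kernel.
  under [RHS]eq_bigr do rewrite mulrDr.
  rewrite big_split /= [X in _ = _ + X](bigD1_seq k) //= eqxx [X in _ + (_ + X)]big1; last first.
    by move=> j /negbTE ->; rewrite mul0r mulr0.
  congr (_ + _); last by rewrite addr0 mul1r; ring.
  by apply: eq_bigr => j _; rewrite [k + (j - k)]addrC subrK; ring.
- by rewrite map_inj_uniq // => x y /addIr.
- move=> m; apply: contraLR => km; rewrite phi0 ?mulr0 ?eqxx //.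
  by apply: contra km => skm; apply/mapP; exists (k + m); rewrite // addrC addKr.
Qed.

Lemma sqnormE (s : seq Zd) (phi : Zd -> R) : uniq s -> (forall k, k \notin s -> phi k = 0) ->
  sqnorm phi = \sum_(k <- s) phi k ^+ 2.
Proof.
move=> us phi0; apply: fsbig_setT_seq => // k.
by apply: contraLR => /phi0 ->; rewrite expr0n eqxx.
Qed.

Lemma lpt_coord (k : Zd) i : lpt eps k 0 i = eps * (k 0 i)%:~R.
Proof. by rewrite !mxE. Qed.

Lemma lptB (k j : Zd) : lpt eps (k - j) = lpt eps k - lpt eps j.
Proof. by apply/rowP => i; rewrite !mxE rmorphB mulrBr. Qed.

Lemma ball_lat_finite (y : Zd) (r : R) :
  exists2 G : seq Zd, uniq G & forall k, ball_lat eps y r k -> k \in G.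
Proof.
have r_eps0 : 0 <= `|r| / eps by rewrite divr_ge0 // ltW.
set N := Num.Def.archi_bound (`|r| / eps); have rN := archi_boundP r_eps0.
exists [seq y - z | z <- box_seq d (zball N)].
  by rewrite map_inj_uniq ?box_seq_uniq ?zball_uniq // => u v /addrI /oppr_inj.
move=> k yk; apply/mapP; exists (y - k); last by rewrite subKr.
apply: mem_box_seq => i; apply: mem_zball; rewrite -(ler_nat R) natr_absz intr_norm.
have ykr : eps * `|((y - k) 0 i)%:~R| <= enorm (lpt eps y - lpt eps k).
  by apply: le_trans (coord_le_enorm _ i); rewrite -lptB lpt_coord normrM gtr0_norm.
have : eps * `|((y - k) 0 i)%:~R| < `|r| by apply: le_lt_trans ykr (lt_le_trans yk (ler_norm r)).
rewrite mulrC -ltr_pdivlMr // => /lt_trans /(_ rN); exact: ltW.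
Qed.

Lemma sum_sq_gt0 (s : seq Zd) (phi : Zd -> R) : uniq s -> (forall k, k \notin s -> phi k = 0) ->
  phi != (fun _ => 0) -> 0 < \sum_(k <- s) phi k ^+ 2.
Proof.
move=> us phi0 nz; have [k phik] : exists k, phi k != 0.
  apply/not_existsP => allz; move/eqP: nz; apply; apply/funext => k.
  by apply/eqP; apply/negPn/negP => /allz.
have ks : k \in s by apply: contraNT phik => /phi0 ->.
apply: lt_le_trans (ler_sum_term (f := fun k => phi k ^+ 2) us ks (fun _ => sqr_ge0 _)).
by rewrite exprn_even_gt0.
Qed.

Lemma has_lbound_rayleigh_ball (y : Zd) (r : R) :
  has_lbound [set q | exists phi : Zd -> R, [/\ c0 (ball_lat eps y r) phi,
    phi != (fun _ => 0) & q = qform a V eps phi / sqnorm phi]].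
Proof.
have [G uG yG] := ball_lat_finite y r; set A := \sum_(k <- G) \sum_(j <- G) `|ham_kernel k j|.
exists (- A) => _ [phi [[_ phiG] nz ->]].
have phi0 k : k \notin G -> phi k = 0.
  by move=> kG; apply/eqP; apply: contraNT kG => /phiG /yG.
rewrite (qformE uG phi0) (sqnormE uG phi0) ler_pdivlMr ?sum_sq_gt0 //.
rewrite mulNr; apply: kernel_form_ge_schur => [j jG | j jG]; last rewrite /A exchange_big /=.
  all: apply: (ler_sum_term _ jG) => // l; exact: sumr_ge0.
Qed.

Lemma LambdaR_mul_le (y : Zd) (r : R) (s : seq Zd) (psi : Zd -> R) :
  uniq s -> (forall k, k \notin s -> psi k = 0) -> c0 (ball_lat eps y r) psi ->
  LambdaR a V eps r y * \sum_(k <- s) psi k ^+ 2 <= kernel_form ham_kernel s psi.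
Proof.
move=> us psi0 psiB; have [-> | nz] := eqVneq psi (fun _ => 0).
  rewrite /kernel_form !big1 ?mulr0 // => k _; rewrite ?expr0n // big1 // => j _.
  by rewrite !mul0r.
rewrite -ler_pdivlMr ?sum_sq_gt0 // -(qformE us psi0) -(sqnormE us psi0).
by apply: ge_inf; [exact: has_lbound_rayleigh_ball | exists psi].
Qed.

End LatticeRayleigh.

Section BoxLocalization.
Variables (R : realType) (d : nat).
Notation Zd := 'rV[int]_d.
Variables (a : Zd -> 'rV[R]_d -> R -> R) (V : 'rV[R]_d -> R) (eps : R) (A : R).
Hypothesis eps_gt0 : 0 < eps.
Hypothesis a_moment : forall x (M : seq Zd), uniq M ->
  \sum_(m <- M) `|a m x eps| * sqnormz R m <= A.
Hypothesis a_sym : forall k j : Zd, a (j - k) (lpt eps k) eps = a (k - j) (lpt eps j) eps.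
Variables (L : nat) (s : seq Zd).
Hypothesis L_gt0 : (0 < L)%N.
Hypothesis s_uniq : uniq s.

Local Notation K := (ham_kernel a V eps).
Local Notation S := (cutoff_corr R L (0 : Zd)).
Let X := undup [seq k - z | k <- s, z <- box_seq d (window_seq L)].

Lemma ham_kernel_sym k j : K k j = K j k.
Proof.
by rewrite /ham_kernel a_sym; case: eqVneq => [->|]; rewrite ?mul0r // eq_sym => /negbTE ->.
Qed.

Lemma ham_kernel_moment k (M : seq Zd) : uniq M ->
  \sum_(j <- M) `|K k j| * sqnormz R (j - k) <= A.
Proof.
move=> uM; apply: le_trans (a_moment (lpt eps k) (M := [seq j - k | j <- M]) _).
  rewrite big_map le_eqVlt; apply/orP; left; apply/eqP; apply: eq_bigr => j _.
  by rewrite /ham_kernel; case: eqVneq => [->|_]; rewrite ?subrr ?sqnormz0 ?mulr0 // mul0r addr0.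
by rewrite map_inj_uniq // => u v /addIr.
Qed.

Lemma sum_cutoff_translates k j : k \in s ->
  \sum_(x <- X) cutoff R L (k - x) * cutoff R L (j - x) = cutoff_corr R L (j - k).
Proof.
move=> ks; rewrite -(fsbig_setT_seq (undup_uniq _)); last first.
  move=> x kjx; rewrite mem_undup -[x](subKr k); apply: allpairs_f => //.
  by apply: mem_box_seq => i; apply: (@cutoff_neq0 R); apply: contraNneq kjx => ->; rewrite mul0r.
rewrite -sum_cutoff_shift (reindex_fsbigT (fun z => k - z)); last first.
  by exists (fun z => k - z) => z; rewrite subKr.
by apply: eq_fsbigr => z _; rewrite subKr opprB addrCA.
Qed.

Let err_kernel (k j : Zd) : R := K k j * (S - cutoff_corr R L (j - k)).
Let localized (phi : Zd -> R) (x : Zd) : Zd -> R := fun k => cutoff R L (k - x) * phi k.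

Lemma localization_error (phi : Zd -> R) :
  - (2 * S / L%:R * A * \sum_(k <- s) phi k ^+ 2) <= kernel_form err_kernel s phi.
Proof.
have c0 : 0 <= 2 * S / L%:R by rewrite divr_ge0 // mulr_ge0 // cutoff_corr0 exprn_ge0.
have entry k j : `|err_kernel k j| <= 2 * S / L%:R * (`|K k j| * sqnormz R (j - k)).
  rewrite normrM (@ger0_norm _ (_ - _)) ?subr_ge0 ?cutoff_corr_le0 // mulrCA ler_wpM2l //.
  by rewrite mulrAC ler_pdivlMr ?ltr0n // mulrC cutoff_corr_gap.
apply: kernel_form_ge_schur => [k _ | j _].
  apply: le_trans (ler_sum _ (fun j _ => entry k j)) _.
  by rewrite -mulr_sumr ler_wpM2l ?ham_kernel_moment.
apply: le_trans (ler_sum _ (fun k _ => entry k j)) _.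
rewrite -mulr_sumr ler_wpM2l //.
under eq_bigr do rewrite ham_kernel_sym -sqnormz_opp opprB.
exact: ham_kernel_moment.
Qed.

Lemma sum_localized_kernel_form (phi : Zd -> R) :
  \sum_(x <- X) kernel_form K s (localized phi x) =
  S * kernel_form K s phi - kernel_form err_kernel s phi.
Proof.
rewrite (sum_kernel_form_weights K phi (P := fun k j => cutoff_corr R L (j - k))); last first.
  by move=> k j ks _; apply: sum_cutoff_translates.
rewrite /kernel_form mulr_sumr -sumrB; apply: eq_bigr => k _.
by rewrite mulr_sumr -sumrB; apply: eq_bigr => j _; rewrite /err_kernel; ring.
Qed.

Lemma sum_localized_sq (c phi : Zd -> R) :
  \sum_(x <- X) \sum_(y <- s) c y * localized phi x y ^+ 2 = S * \sum_(y <- s) c y * phi y ^+ 2.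
Proof.
apply: sum_sq_weights => k ks.
by under eq_bigr do rewrite expr2; rewrite sum_cutoff_translates // subrr.
Qed.

Lemma cutoff_ball (x y k : Zd) (r : R) : d%:R * (eps * L%:R) < r ->
  cutoff R L (k - x) != 0 -> cutoff R L (y - x) != 0 -> ball_lat eps y r k.
Proof.
move=> Lr kx yx; rewrite /ball_lat /= -lptB; apply: le_lt_trans Lr.
apply: enorm_le_coord => [|i]; first by rewrite mulr_ge0 ?ler0n ?ltW.
by rewrite lpt_coord normrM gtr0_norm // ler_wpM2l ?(ltW eps_gt0) // (cutoff_coord_dist i kx yx).
Qed.

Lemma LambdaR_localized_le (r : R) (phi : Zd -> R) x :
  d%:R * (eps * L%:R) < r -> (forall k, k \notin s -> phi k = 0) ->
  \sum_(y <- s) LambdaR a V eps r y * localized phi x y ^+ 2 <= kernel_form K s (localized phi x).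
Proof.
move=> Lr phi0; set psi := localized phi x.
have psi0 k : k \notin s -> psi k = 0.
  by move=> /phi0; rewrite /psi /localized => ->; rewrite mulr0.
have [-> | nz] := eqVneq psi (fun _ => 0).
  rewrite /kernel_form !big1 // => k _; rewrite ?expr0n ?mulr0 // big1 // => j _.
  by rewrite !mul0r.
apply: sum_mul_sq_le; first exact: (sum_sq_gt0 s_uniq psi0 nz).
move=> y ys psiy; apply: (LambdaR_mul_le a V eps_gt0 s_uniq psi0); split.
  by apply: sub_finite_set (finite_seq s) => k /= psik; apply: contraNT psik => /psi0 ->.
move=> k /= psik; apply: (cutoff_ball (x := x) Lr).
  by apply: contraNneq psik; rewrite /psi /localized => ->; rewrite mul0r.
by apply: contraNneq psiy; rewrite /psi /localized => ->; rewrite mul0r.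
Qed.

Lemma localized_lower_bound (delta r : R) (phi : Zd -> R) :
  2 * A <= delta * L%:R -> d%:R * (eps * L%:R) < r -> (forall k, k \notin s -> phi k = 0) ->
  \sum_(y <- s) (LambdaR a V eps r y - delta) * phi y ^+ 2 <= kernel_form K s phi.
Proof.
move=> AL Lr phi0; have S0 : 0 < S by rewrite cutoff_corr0 exprn_gt0 ?ltr0n.
have lam : S * \sum_(y <- s) LambdaR a V eps r y * phi y ^+ 2 <=
    S * kernel_form K s phi - kernel_form err_kernel s phi.
  rewrite -sum_localized_sq -sum_localized_kernel_form; apply: ler_sum => x _.
  exact: LambdaR_localized_le.
have err := localization_error phi.
have AS : 2 * S / L%:R * A <= S * delta.
  have -> : 2 * S / L%:R * A = S * (2 * A) / L%:R by ring.
  by rewrite ler_pdivrMr ?ltr0n // -mulrA ler_wpM2l // ltW.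
have := ler_wpM2r (sumr_ge0 _ (fun k _ => sqr_ge0 (phi k)) : 0 <= \sum_(k <- s) phi k ^+ 2) AS.
move=> errN; rewrite -(ler_pM2l S0); under eq_bigr do rewrite mulrBl; rewrite sumrB -mulr_sumr.
lra.
Qed.

End BoxLocalization.

Theorem lemmaB2 (R : realType) (d : nat) (dpos : (0 < d)%N)
  (a0 a1 : 'rV[int]_d -> 'rV[R]_d -> R) (ra : 'rV[int]_d -> 'rV[R]_d -> R -> R)
  (eps0 : R) (V0 V1 : 'rV[R]_d -> R) (rv : 'rV[R]_d -> R -> R) :
  coef_hyp a0 a1 ra -> pot_hyp eps0 V0 V1 rv a0 ->
  forall eps : R, 0 < eps <= 1 -> eps <= eps0 ->
  forall delta : R, 0 < delta ->
  exists Rd : R, 0 < Rd /\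
  forall r : R, Rd < r ->
  forall phi : 'rV[int]_d -> R, c0 [set: 'rV[int]_d] phi ->
    \sum_(k \in [set: 'rV[int]_d])
       (LambdaR (coef a0 a1 ra) (pot V0 V1 rv eps) eps r k - delta) * phi k ^+ 2
    <= qform (coef a0 a1 ra) (pot V0 V1 rv eps) eps phi.
Proof.
move=> ha _ eps epsI _ delta delta0; have /andP [eps_gt0 _] := epsI.
have [A a_moment] := coef_moment_bound ha epsI.
have A0 : 0 <= A by have := a_moment 0 [::] isT; rewrite big_nil.
have a_sym k j : coef a0 a1 ra (j - k) (lpt eps k) eps = coef a0 a1 ra (k - j) (lpt eps j) eps.
  case: ha => _ [_ [_ [_ [_ [sym _]]]]].
  by rewrite sym // opprB lptB [lpt eps k + _]addrC subrK.
set L := (Num.Def.archi_bound (2 * A / delta)).+1.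
have AL : 2 * A <= delta * L%:R.
  rewrite [delta * _]mulrC -ler_pdivrMr //; apply/ltW/(lt_le_trans (archi_boundP _)); last first.
    by rewrite ler_nat.
  by rewrite divr_ge0 ?mulr_ge0 // ltW.
have Ld0 : 0 <= d%:R * (eps * L%:R) by rewrite !mulr_ge0 ?ler0n // ltW.
exists (d%:R * (eps * L%:R) + 1); split => [|r Rr phi [/finite_seqP [s0 supp] _]]; first lra.
have phi0 k : k \notin undup s0 -> phi k = 0.
  rewrite mem_undup => ks0; apply/eqP; apply: contraNT ks0 => phik.
  by have : [set k | phi k != 0] k := phik; rewrite supp.
rewrite (qformE _ _ _ (undup_uniq s0) phi0) (fsbig_setT_seq (undup_uniq s0)); last first.
  by move=> k; apply: contraLR => /phi0 ->; rewrite expr0n mulr0 eqxx.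
have Lr : d%:R * (eps * L%:R) < r by lra.
exact: (localized_lower_bound _ eps_gt0 a_moment a_sym (ltn0Sn _) (undup_uniq s0) AL Lr phi0).
Qed.
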